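(* Let $(\mathbf{x}_i,y_i)_{i=1}^n\subset\mathbb{R}^d\times\{\pm1\}$ satisfy $\|\mathbf{x}_i\|\le 1$ for all $i$, and suppose there are $\gamma>0$ and a unit vector $\mathbf{w}_*$ with $y_i\mathbf{x}_i^\top\mathbf{w}_*\ge\gamma$ for all $i$. Let $L(\mathbf{w})=\frac1n\sum_{i=1}^n\ln\big(1+\exp(-y_i\mathbf{x}_i^\top\mathbf{w})\big)$ and run gradient descent $\mathbf{w}_t=\mathbf{w}_{t-1}-\eta\nabla L(\mathbf{w}_{t-1})$ from $\mathbf{w}_0=0$. Let $T$ be an integer with $T\ge 120\max\{e,n\}/\gamma^2$ and set $\eta:=\gamma^2T/120$. Then $\tau:=\frac{60}{\gamma^2}\max\big\{\eta,n,e,\frac{\eta+n}{\eta}\ln\frac{\eta+n}{\eta}\big\}\le T/2$, and \[L(\mathbf{w}_T)\le 480\,\frac{\ln^2(\gamma^4T^2)}{\gamma^4T^2}.\] *)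

From HB Require Import structures.
From mathcomp Require Import all_boot all_order all_algebra.
From mathcomp Require Import all_classical all_reals all_analysis.
Set Implicit Arguments. Unset Strict Implicit. Unset Printing Implicit Defensive.
Import Order.TTheory GRing.Theory Num.Theory.
Import numFieldNormedType.Exports.
Local Open Scope ring_scope.

Section Defs.
Variables (R : realType) (d : nat).

Definition dotp (x w : 'rV[R]_d) : R := \sum_(j < d) x 0 j * w 0 j.
Definition enorm (x : 'rV[R]_d) : R := Num.sqrt (\sum_(j < d) x 0 j ^+ 2).

Definition ebasis (j : 'I_d) : 'rV[R]_d := delta_mx 0 j.

Definition grad (f : 'rV[R]_d -> R) (w : 'rV[R]_d) : 'rV[R]_d :=
  \row_(j < d) derive f w (ebasis j).

Definition logistic_loss (n : nat) (x : 'I_n -> 'rV[R]_d) (y : 'I_n -> R)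
  (w : 'rV[R]_d) : R :=
  (n%:R)^-1 * \sum_(i < n) ln (1 + expR (- (y i * dotp (x i) w))).

Fixpoint gd (f : 'rV[R]_d -> R) (eta : R) (t : nat) : 'rV[R]_d :=
  match t with
  | 0 => 0
  | t'.+1 => gd f eta t' - eta *: grad f (gd f eta t')
  end.

End Defs.

From HB Require Import structures.
From mathcomp Require Import all_boot all_order all_algebra.
From mathcomp Require Import all_classical all_reals all_analysis.
From mathcomp Require Import ring lra zify.
Import Order.TTheory GRing.Theory Num.Theory.
Import numFieldNormedType.Exports.
Set Implicit Arguments. Unset Strict Implicit. Unset Printing Implicit Defensive.
Local Open Scope ring_scope.

(* Everything is controlled by the mean sigmoid weight G(w) = 1/n sum_i sigm (y_i x_i.w):
   |grad L(w)| <= G(w), <w*, grad L(w)> <= - gamma G(w), and L(w) <= 2 G(w) once n G(w) <= 2/5.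
   Phase 1 is a perceptron-type argument: against the comparator u = (6 + eta/2)/gamma w*,
   the squared distance |w_t - u|^2 grows by at most 2 eta exp(-6) per step, whereas
   <w_t, w*> grows by eta gamma G(w_t); so G(w_k) <= 1/(5 eta) for some k < T/2.
   Phase 2: from then on eta G <= 2/5, the loss is locally quadratic along each step and
   L(w_{t+1}) <= L(w_t) - eta gamma^2 L(w_t)^2 / 12, so 1/L grows linearly and
   L(w_T) <= 24 / (eta gamma^2 T) = 2880 / (gamma^4 T^2). *)

Section ScalarLogistic.
Variable R : realType.
Implicit Types z h : R.

Definition logl z : R := ln (1 + expR (- z)).

(* [sigm z = 1 / (1 + expR z)] is the negated derivative of [logl] at [z]. *)
Definition sigm z : R := expR (- z) / (1 + expR (- z)).

Lemma sigm_gt0 z : 0 < sigm z.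
Proof. by rewrite /sigm divr_gt0 // ?addr_gt0 // expR_gt0. Qed.

Lemma sigm_lt1 z : sigm z < 1.
Proof. by rewrite /sigm ltr_pdivrMr ?mul1r ?addr_gt0 ?expR_gt0 // ltrDr. Qed.

Lemma logl_gt0 z : 0 < logl z.
Proof. by apply: ln_gt0; rewrite ltrDl expR_gt0. Qed.

Lemma logl_le_expR z : logl z <= expR (- z).
Proof. by apply: le_ln1Dx; have := expR_gt0 (- z); lra. Qed.

Lemma sigm_le_logl z : sigm z <= logl z.
Proof.
rewrite /sigm /logl; set u := expR (- z); have u0 : 0 < u by exact: expR_gt0.
have v0 : 0 < (1 + u)^-1 by rewrite invr_gt0 addr_gt0.
have := le_ln1Dx (x := (1 + u)^-1 - 1) ltac:(lra).
rewrite addrC subrK lnV ?posrE ?addr_gt0 //.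
have -> : u / (1 + u) = 1 - (1 + u)^-1 by field; lra.
lra.
Qed.

Lemma logl_le_2sigm z : sigm z <= 2/5 -> logl z <= 2 * sigm z.
Proof.
rewrite /sigm /logl; set u := expR (- z); have u0 : 0 < u by exact: expR_gt0.
rewrite ler_pdivrMr ?addr_gt0 // => h.
apply: le_trans (le_ln1Dx _) _; first lra.
rewrite mulrA ler_pdivlMr ?addr_gt0 //; nra.
Qed.

Lemma logl_diffE z (z' : R) :
  logl z' - logl z = ln (1 + sigm z * (expR (- (z' - z)) - 1)).
Proof.
rewrite /logl /sigm; set A := expR (- z); set r := expR (- (z' - z)).
have A0 : 0 < A by exact: expR_gt0.
have r0 : 0 < r by exact: expR_gt0.
have -> : expR (- z') = A * r by rewrite /A /r -expRD; congr expR; ring.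
by rewrite -ln_div ?posrE ?addr_gt0 ?mulr_gt0 //; congr ln; field; lra.
Qed.

(* Concavity of [ln] applied to [1 + sigm z * (r - 1)], a convex combination of [r] and [1]. *)
Lemma logl_tangent_le z (z' : R) : logl z - sigm z * (z' - z) <= logl z'.
Proof.
have := logl_diffE z z'.
set p := sigm z; set r := expR (- (z' - z)).
have p0 : 0 < p := sigm_gt0 z; have p1 : p < 1 := sigm_lt1 z.
have r0 : 0 < r by exact: expR_gt0.
have : p * ln r + (1 - p) * ln 1 <= ln (p * r + (1 - p) * 1).
  exact: (@concave_ln R (Itv01 (ltW p0) (ltW p1)) r 1 r0 ltr01).
rewrite ln1 mulr0 addr0 /r expRK.
have -> : p * expR (- (z' - z)) + (1 - p) * 1 = 1 + p * (expR (- (z' - z)) - 1).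
  by ring.
lra.
Qed.

Lemma logl_quad_ub z h : `|h| <= 2/5 ->
  logl (z + h) <= logl z - sigm z * h + 5/3 * sigm z * h ^+ 2.
Proof.
move=> h_small; have := logl_diffE z (z + h).
have -> : z + h - z = h by ring.
set p := sigm z; set r := expR (- h).
have p0 : 0 < p := sigm_gt0 z; have p1 : p < 1 := sigm_lt1 z.
have r0 : 0 < r by exact: expR_gt0.
have /andP[hlo hhi] : -(2/5) <= h <= 2/5 by rewrite -ler_norml.
have r_le : r <= 1 - h + 5/3 * h ^+ 2.
  have rh : r * (1 + h) <= 1.
    rewrite -[leRHS](expRxMexpNx_1 h) mulrC /r.
    by apply: ler_wpM2r; [exact: ltW | exact: expR_ge1Dx].
  have : 1 <= (1 + h) * (1 - h + 5/3 * h ^+ 2) by nra.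
  nra.
have := le_ln1Dx (x := p * (r - 1)) ltac:(have := mulr_gt0 p0 r0; nra).
nra.
Qed.

Lemma is_derive_logl (a b : R) :
  is_derive (0:R) 1 (fun s : R => logl (s * a + b)) (- sigm b * a).
Proof.
have pos u : 0 < 1 + expR u :> R by rewrite addr_gt0 // expR_gt0.
have d_lin : is_derive (0:R) 1 (fun s : R => - (s * a + b)) (- a).
  by apply: is_derive_eq; rewrite scaler0 add0r addr0 /GRing.scale /= mulr1.
have d_exp (u : R) : is_derive u 1 (fun v : R => 1 + expR v) (expR u).
  by apply: is_derive_eq; rewrite add0r mul1r.
have d_ln := is_derive1_comp (g := fun v => 1 + expR v)
  (is_derive1_ln (pos (- (0 * a + b)))) (d_exp _).
move/is_derive_eq: (is_derive1_comp (g := fun s => - (s * a + b)) d_ln d_lin).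
by apply; rewrite /sigm mul0r add0r; ring.
Qed.

End ScalarLogistic.

Section Numerics.
Variable R : realType.

Lemma expR1_ge2 : 2 <= expR 1 :> R.
Proof. by have := @expR_ge1Dx R 1. Qed.

Lemma expR1_le4 : expR 1 <= 4 :> R.
Proof.
have h := @expR_ge1Dx R (- (1/2)).
have m : expR (1/2) * expR (- (1/2)) = 1 :> R by rewrite expRxMexpNx_1.
have half_le : expR (1/2) <= 2 :> R by have := @expR_gt0 R (1/2); nra.
have -> : (1 : R) = 1/2 + 1/2 by field.
by rewrite expRD; have := @expR_gt0 R (1/2); nra.
Qed.

Lemma expRN6_le : expR (- 6) <= 1/64 :> R.
Proof.
have e6 : 2 ^+ 6 <= expR 1 ^+ 6 :> R.
  by apply: lerXn2r; rewrite ?nnegrE ?expR_ge0 ?expR1_ge2.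
have -> : (- 6 : R) = - (6%:R * 1) by rewrite mulr1.
rewrite expRN expRM_natl div1r.
by rewrite lef_pV2 ?posrE ?exprn_gt0 ?expR_gt0 // -natrX in e6 *.
Qed.

Lemma invr_le_step (l l' a : R) : 0 < l' -> 0 < l -> 0 <= a ->
  l' <= l - a * l ^+ 2 -> l^-1 + a <= l'^-1.
Proof.
move=> l'_gt0 l_gt0 a_ge0 step.
rewrite -(ler_pM2r l'_gt0) mulVf ?gt_eqF //.
apply: le_trans (ler_wpM2l _ step) _.
  by rewrite addr_ge0 // invr_ge0 ltW.
have -> : (l^-1 + a) * (l - a * l ^+ 2) = 1 - a ^+ 2 * l ^+ 2 by field; lra.
by rewrite lerBlDr lerDl mulr_ge0 ?sqr_ge0.
Qed.

(* With [c = (6 + eta / 2) / gamma] the comparator of [gd_dist_le], a margin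
   [gamma * t / 5] outgrows the distance bound once [gamma ^+ 2 * t >= 60 * eta]. *)
Lemma margin_gap_gt (gamma eta t c A : R) :
  0 < gamma -> 2 <= eta -> 60 * eta <= gamma ^+ 2 * t -> c * gamma = 6 + eta / 2 ->
  gamma * t / 5 <= A -> c ^+ 2 + 2 * eta * t * expR (- 6) < (A - c) ^+ 2.
Proof.
move=> gamma_gt0 eta_ge2 t_large cE A_ge.
set u := gamma ^+ 2 * t; have u_ge : 60 * eta <= u by [].
have u_gt0 : 0 < u by lra.
have B_gt : c < gamma * t / 5.
  rewrite -(ltr_pM2r gamma_gt0) cE (_ : gamma * t / 5 * gamma = u / 5); last first.
    by rewrite /u; ring.
  lra.
apply: lt_le_trans (_ : (gamma * t / 5 - c) ^+ 2 <= _); last first.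
  by rewrite ler_sqr ?nnegrE; lra.
rewrite -(ltr_pM2r (exprn_gt0 2 gamma_gt0)).
have -> : (c ^+ 2 + 2 * eta * t * expR (- 6)) * gamma ^+ 2 =
    (c * gamma) ^+ 2 + 2 * eta * u * expR (- 6) by rewrite /u; ring.
have -> : (gamma * t / 5 - c) ^+ 2 * gamma ^+ 2 = (u / 5 - c * gamma) ^+ 2.
  by rewrite /u; ring.
rewrite cE.
have : 2 * eta * u * expR (- 6) <= eta * u / 32.
  have : 0 <= 2 * eta * u by apply: mulr_ge0; lra.
  move/ler_wpM2l/(_ _ _ expRN6_le); lra.
have : 0 < u * (u / 25 - 2 * (6 + eta / 2) / 5 - eta / 32) by apply: mulr_gt0; lra.
rewrite !expr2; nra.
Qed.

Lemma tau_le_half (n : nat) (gamma eta T : R) :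
  0 < gamma -> expR 1 <= eta -> n%:R <= eta -> eta = gamma ^+ 2 * T / 120 ->
  60 / gamma ^+ 2 *
    Num.max eta (Num.max (n%:R) (Num.max (expR 1)
      ((eta + n%:R) / eta * ln ((eta + n%:R) / eta)))) <= T / 2.
Proof.
move=> gamma_gt0 e_le n_le etaE.
have e2 := expR1_ge2; have eta_gt0 : 0 < eta by lra.
set r := (eta + n%:R) / eta.
have r1 : 1 <= r by rewrite ler_pdivlMr // mul1r; have := ler0n R n; lra.
have r2 : r <= 2 by rewrite ler_pdivrMr //; lra.
have lnr1 : ln r <= 1 by have := @le_ln1Dx R (r - 1) ltac:(lra); rewrite addrC subrK; lra.
have : r * ln r <= eta by have := ln_ge0 r1; nra.
move=> rlnr; rewrite (_ : T / 2 = 60 / gamma ^+ 2 * eta); last first.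
  by rewrite etaE; field; rewrite gt_eqF.
by rewrite ler_wpM2l ?divr_ge0 ?sqr_ge0 // !ge_max lexx e_le n_le rlnr.
Qed.

Lemma ler_ln_sqr_div (X : R) : 64 <= X -> 2880 / X <= 480 * (ln X ^+ 2 / X).
Proof.
move=> X_ge; have X_gt0 : 0 < X by lra.
have lnX_ge3 : 3 <= ln X.
  rewrite -ler_expR lnK ?posrE //.
  have -> : (3 : R) = 3%:R * 1 by rewrite mulr1.
  rewrite expRM_natl; apply: le_trans X_ge.
  rewrite (_ : 64 = 4 ^+ 3 :> R); last by rewrite -natrX.
  by apply: lerXn2r; rewrite ?nnegrE ?expR_ge0 ?expR1_le4.
rewrite mulrA ler_pM2r ?invr_gt0 //; nra.
Qed.

End Numerics.

Section Dotp.
Variables (R : realType) (d : nat).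
Implicit Types a b c : 'rV[R]_d.

Lemma dotpC a b : dotp a b = dotp b a.
Proof. by apply: eq_bigr => j _; rewrite mulrC. Qed.

Lemma dotpDr a b c : dotp a (b + c) = dotp a b + dotp a c.
Proof. by rewrite /dotp -big_split; apply: eq_bigr => j _; rewrite mxE mulrDr. Qed.

Lemma dotpZr a b k : dotp a (k *: b) = k * dotp a b.
Proof. by rewrite /dotp mulr_sumr; apply: eq_bigr => j _; rewrite mxE mulrCA. Qed.

Lemma dotpBr a b c : dotp a (b - c) = dotp a b - dotp a c.
Proof. by rewrite dotpDr -scaleN1r dotpZr mulN1r. Qed.

Lemma dotpZl a b k : dotp (k *: b) a = k * dotp b a.
Proof. by rewrite dotpC dotpZr dotpC. Qed.

Lemma dotpBl a b c : dotp (b - c) a = dotp b a - dotp c a.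
Proof. by rewrite dotpC dotpBr !(dotpC a). Qed.

Lemma dotp0r a : dotp a 0 = 0.
Proof. by rewrite /dotp big1 // => j _; rewrite mxE mulr0. Qed.

Lemma dotp_ebasis a j : dotp a (@ebasis R d j) = a 0 j.
Proof.
rewrite /dotp /ebasis (bigD1 j) //= big1 ?addr0; first by rewrite mxE !eqxx mulr1.
by move=> k kj; rewrite mxE (negbTE kj) andbF mulr0.
Qed.

Lemma dotpp_ge0 a : 0 <= dotp a a.
Proof. by apply: sumr_ge0 => j _; rewrite -expr2 sqr_ge0. Qed.

Lemma dotpBZ_expand a b k :
  dotp (a - k *: b) (a - k *: b) = dotp a a - 2 * k * dotp a b + k ^+ 2 * dotp b b.
Proof. by rewrite !dotpBl !dotpBr !dotpZl !dotpZr (dotpC b a); ring. Qed.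

Lemma dotp_sqr_le a b : dotp a b ^+ 2 <= dotp a a * dotp b b.
Proof.
have [bb0|bb_neq0] := eqVneq (dotp b b) 0.
  have b0 j : b 0 j = 0.
    apply/eqP; rewrite -[_ == 0]orbb -mulf_eq0; apply/eqP.
    by move/psumr_eq0P: bb0; apply => // k _; rewrite -expr2 sqr_ge0.
  have -> : dotp a b = 0 by rewrite /dotp big1 // => j _; rewrite b0 mulr0.
  by rewrite bb0 expr0n /= mulr0.
have bb_gt0 : 0 < dotp b b by rewrite lt_neqAle eq_sym bb_neq0 dotpp_ge0.
have := dotpp_ge0 (dotp b b *: a - dotp a b *: b).
rewrite dotpBZ_expand !dotpZl !dotpZr.
set p := dotp b b; set q := dotp a b => h.
have : 0 <= p * (p * dotp a a - q ^+ 2) by rewrite expr2; nra.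
by rewrite pmulr_rge0 // subr_ge0 mulrC.
Qed.

Lemma enorm_sqr a : enorm a ^+ 2 = dotp a a.
Proof.
rewrite /enorm sqr_sqrtr; last by apply: sumr_ge0 => j _; rewrite sqr_ge0.
by apply: eq_bigr => j _; rewrite expr2.
Qed.

End Dotp.

Lemma derive_line (R : numFieldType) (V W : normedModType R) (f : V -> W) a v :
  derive f a v = derive (fun h : R => f (a + h *: v)) 0 1.
Proof.
rewrite /derive; congr lim; f_equal; apply/funext => h /=.
by rewrite scale0r addr0 addr0 (addrC a) /GRing.scale /= mulr1.
Qed.

Section LogisticRisk.
Variables (R : realType) (d n : nat) (x : 'I_n -> 'rV[R]_d) (y : 'I_n -> R).
Local Notation L := (logistic_loss x y).
Implicit Types u v w : 'rV[R]_d.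

Definition mean_sigm w := n%:R^-1 * \sum_(i < n) sigm (y i * dotp (x i) w).
Local Notation G := mean_sigm.

Lemma logistic_lossE w : L w = n%:R^-1 * \sum_(i < n) logl (y i * dotp (x i) w).
Proof. by []. Qed.

Lemma derive_logistic_loss w v : derive L w v =
  - (n%:R^-1 * \sum_(i < n) sigm (y i * dotp (x i) w) * (y i * dotp (x i) v)).
Proof.
pose a i := y i * dotp (x i) v; pose b i := y i * dotp (x i) w.
rewrite derive_line.
have -> : (fun h : R => L (w + h *: v)) =
    n%:R^-1 \*: \sum_(i < n) (fun s : R => logl (s * a i + b i)).
  apply/funext => h; rewrite fct_sumE /= logistic_lossE; congr (_ * _).
  by apply: eq_bigr => i _; rewrite dotpDr dotpZr /a /b; congr logl; ring.
have dsum := is_deriveZ n%:R^-1 (is_derive_sum (fun i => is_derive_logl (a i) (b i))).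
rewrite (@derive_val _ _ _ _ _ _ _ dsum) /GRing.scale /= -mulrN -sumrN.
by congr (_ * _); apply: eq_bigr => i _; rewrite mulNr.
Qed.

Lemma dotp_grad u w : dotp u (grad L w) =
  - (n%:R^-1 * \sum_(i < n) sigm (y i * dotp (x i) w) * (y i * dotp (x i) u)).
Proof.
rewrite {1}/dotp (eq_bigr (fun j => u 0 j * - (n%:R^-1 * \sum_(i < n)
    sigm (y i * dotp (x i) w) * (y i * x i 0 j)))); last first.
  move=> j _; rewrite /grad mxE derive_logistic_loss; congr (_ * - (_ * _)).
  by apply: eq_bigr => i _; rewrite dotp_ebasis.
have -> : \sum_(i < n) sigm (y i * dotp (x i) w) * (y i * dotp (x i) u) =
    \sum_(j < d) \sum_(i < n) sigm (y i * dotp (x i) w) * (y i * x i 0 j) * u 0 j.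
  rewrite exchange_big /=; apply: eq_bigr => i _.
  by rewrite /dotp !mulr_sumr; apply: eq_bigr => j _; ring.
by rewrite mulr_sumr -sumrN; apply: eq_bigr => j _; rewrite -mulr_suml; ring.
Qed.

Lemma mean_sigm_ge0 w : 0 <= G w.
Proof. by rewrite mulr_ge0 // sumr_ge0 // => i _; exact: ltW (sigm_gt0 _). Qed.

Lemma mean_sigm_le1 w : G w <= 1.
Proof.
rewrite /mean_sigm; have [n0|n_gt0] := posnP n.
  by rewrite (_ : n%:R^-1 = 0) ?mul0r ?ler01 // n0 invr0.
have : \sum_(i < n) sigm (y i * dotp (x i) w) <= \sum_(i < n) 1.
  by apply: ler_sum => i _; exact: ltW (sigm_lt1 _).
by rewrite sumr_const card_ord ler_pdivrMl ?ltr0n // mulr1.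
Qed.

Lemma mean_sigm_le_loss w : G w <= L w.
Proof.
rewrite logistic_lossE ler_wpM2l ?invr_ge0 ?ler0n //.
by apply: ler_sum => i _; exact: sigm_le_logl.
Qed.

Lemma logistic_loss_ge0 w : 0 <= L w.
Proof. exact: le_trans (mean_sigm_ge0 w) (mean_sigm_le_loss w). Qed.

Lemma logistic_loss_gt0 w : (0 < n)%N -> 0 < L w.
Proof.
move=> n_gt0; rewrite logistic_lossE mulr_gt0 ?invr_gt0 ?ltr0n //.
rewrite (bigD1 (Ordinal n_gt0)) //=; apply: ltr_pwDl; first exact: logl_gt0.
by rewrite sumr_ge0 // => i _; exact: ltW (logl_gt0 _).
Qed.

Lemma sigm_le_mean_sigm w i : sigm (y i * dotp (x i) w) <= n%:R * G w.
Proof.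
have n_gt0 : (0 < n)%N := leq_ltn_trans (leq0n i) (ltn_ord i).
rewrite /mean_sigm mulrA mulfV ?pnatr_eq0 -?lt0n // mul1r.
by rewrite (bigD1 i) //= lerDl sumr_ge0 // => k _; exact: ltW (sigm_gt0 _).
Qed.

Lemma logistic_loss_le_2mean_sigm w : n%:R * G w <= 2/5 -> L w <= 2 * G w.
Proof.
move=> h; rewrite logistic_lossE /mean_sigm mulrCA ler_wpM2l ?invr_ge0 ?ler0n // mulr_sumr.
apply: ler_sum => i _; apply: logl_le_2sigm.
exact: le_trans (sigm_le_mean_sigm w i) h.
Qed.

Lemma logistic_loss_tangent_le u w : dotp (u - w) (grad L w) <= L u - L w.
Proof.
rewrite dotp_grad !logistic_lossE -mulrBr -mulrN ler_wpM2l ?invr_ge0 ?ler0n //.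
rewrite -sumrN -sumrB; apply: ler_sum => i _.
have := logl_tangent_le (y i * dotp (x i) w) (y i * dotp (x i) u).
rewrite dotpBr; lra.
Qed.

Hypothesis x_le1 : forall i, dotp (x i) (x i) <= 1.
Hypothesis y_sqr : forall i, y i ^+ 2 = 1.

Lemma sqr_margin_le i v : (y i * dotp (x i) v) ^+ 2 <= dotp v v.
Proof.
rewrite exprMn y_sqr mul1r; apply: le_trans (dotp_sqr_le _ _) _.
by rewrite -[leRHS]mul1r ler_wpM2r ?dotpp_ge0.
Qed.

Lemma abs_margin_le i v : `|y i * dotp (x i) v| <= Num.sqrt (dotp v v).
Proof. by rewrite -sqrtr_sqr ler_sqrt ?dotpp_ge0 // sqr_margin_le. Qed.

(* [grad L w] averages the vectors [- y i *: x i], of norm at most 1, with total weight [G w]. *)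
Lemma norm_grad_le w : Num.sqrt (dotp (grad L w) (grad L w)) <= G w.
Proof.
set v := grad L w; set N := Num.sqrt (dotp v v).
have N0 : 0 <= N := sqrtr_ge0 _.
have vv_le : N ^+ 2 <= G w * N.
  rewrite sqr_sqrtr ?dotpp_ge0 // {1}/v dotp_grad.
  rewrite -mulrA -mulrN ler_wpM2l ?invr_ge0 ?ler0n // mulr_suml -sumrN.
  apply: ler_sum => i _; rewrite -mulrN ler_wpM2l ?(ltW (sigm_gt0 _)) //.
  by apply: ler_normlW; rewrite normrN abs_margin_le.
have := mean_sigm_ge0 w; rewrite expr2 in vv_le; nra.
Qed.

Lemma grad_sqr_le w : dotp (grad L w) (grad L w) <= G w ^+ 2.
Proof.
rewrite -[leLHS]sqr_sqrtr ?dotpp_ge0 //.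
by rewrite ler_sqr ?nnegrE ?sqrtr_ge0 ?mean_sigm_ge0 // norm_grad_le.
Qed.

Lemma logistic_loss_step_le (eta : R) w : 0 < eta -> eta * G w <= 2/5 ->
  L (w - eta *: grad L w) <= L w - eta * dotp (grad L w) (grad L w) / 3.
Proof.
move=> eta_gt0 small_step.
have := dotp_grad (grad L w) w.
set v := grad L w; set N := dotp v v; set g := G w => vvE.
have N0 : 0 <= N := dotpp_ge0 v.
pose z i := y i * dotp (x i) w; pose a i := y i * dotp (x i) v.
have step_i i : logl (y i * dotp (x i) (w - eta *: v)) <=
    logl (z i) + eta * (sigm (z i) * a i) + 5/3 * eta ^+ 2 * N * sigm (z i).
  have -> : y i * dotp (x i) (w - eta *: v) = z i + - (eta * a i).
    by rewrite dotpBr dotpZr /z /a; ring.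
  have a_le : `|a i| <= g := le_trans (abs_margin_le i v) (norm_grad_le w).
  have a_sqr : a i ^+ 2 <= N := sqr_margin_le i v.
  apply: le_trans (logl_quad_ub _ _) _.
    by rewrite normrN normrM gtr0_norm // (le_trans _ small_step) // ler_pM2l // a_le.
  rewrite sqrrN exprMn.
  have : sigm (z i) * (eta ^+ 2 * a i ^+ 2) <= sigm (z i) * (eta ^+ 2 * N).
    by rewrite ler_wpM2l ?(ltW (sigm_gt0 _)) // ler_wpM2l ?sqr_ge0.
  lra.
have ninv_ge0 : 0 <= n%:R^-1 :> R by rewrite invr_ge0 ler0n.
have sum_le : \sum_(i < n) logl (y i * dotp (x i) (w - eta *: v)) <= \sum_(i < n)
    (logl (z i) + eta * (sigm (z i) * a i) + 5/3 * eta ^+ 2 * N * sigm (z i)).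
  exact: ler_sum.
have E1 : n%:R^-1 * \sum_(i < n) eta * (sigm (z i) * a i) = - (eta * N).
  by rewrite vvE -mulr_sumr mulrCA mulrN opprK.
have E2 : n%:R^-1 * \sum_(i < n) 5/3 * eta ^+ 2 * N * sigm (z i) =
    5/3 * eta ^+ 2 * N * g by rewrite -mulr_sumr mulrCA.
have := ler_wpM2l ninv_ge0 sum_le.
rewrite !big_split /= !mulrDr E1 E2 -!logistic_lossE => h; apply: le_trans h _.
have : eta * g * (eta * N) <= 2/5 * (eta * N).
  by apply: ler_wpM2r; [exact: mulr_ge0 (ltW eta_gt0) N0 | exact: small_step].
rewrite expr2; lra.
Qed.

Variables (ws : 'rV[R]_d) (gamma : R).
Hypothesis margin_ws : forall i, gamma <= y i * dotp (x i) ws.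
Hypothesis ws_unit : dotp ws ws = 1.
Hypothesis gamma_gt0 : 0 < gamma.

Lemma dotp_ws_grad_le w : dotp ws (grad L w) <= - (gamma * G w).
Proof.
rewrite dotp_grad lerN2 /mean_sigm mulrCA ler_wpM2l ?invr_ge0 ?ler0n // mulr_sumr.
apply: ler_sum => i _.
by rewrite mulrC ler_wpM2l //; exact: ltW (sigm_gt0 _).
Qed.

Lemma sqr_gamma_mean_sigm_le_grad w : (gamma * G w) ^+ 2 <= dotp (grad L w) (grad L w).
Proof.
have := dotp_sqr_le ws (grad L w); rewrite ws_unit mul1r; apply: le_trans.
have := dotp_ws_grad_le w; have := mulr_ge0 (ltW gamma_gt0) (mean_sigm_ge0 w).
rewrite !expr2; nra.
Qed.

Lemma logistic_loss_scale_le c : 0 <= c -> L (c *: ws) <= expR (- (c * gamma)).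
Proof.
move=> c0; rewrite logistic_lossE; have [n0|n_gt0] := posnP n.
  by rewrite (_ : n%:R^-1 = 0) ?mul0r ?expR_ge0 // n0 invr0.
have : \sum_(i < n) logl (y i * dotp (x i) (c *: ws)) <= \sum_(i < n) expR (- (c * gamma)).
  apply: ler_sum => i _; apply: le_trans (logl_le_expR _) _.
  by rewrite ler_expR lerN2 dotpZr mulrCA ler_wpM2l.
by rewrite sumr_const card_ord ler_pdivrMl ?ltr0n // mulr_natl.
Qed.

Variable eta : R.
Hypothesis eta_gt0 : 0 < eta.
Local Notation W := (gd L eta).

Lemma gd_margin_ge t : eta * gamma * \sum_(k < t) G (W k) <= dotp (W t) ws.
Proof.
elim: t => [|t IH]; first by rewrite big_ord0 mulr0 /= dotpC dotp0r.
rewrite big_ord_recr /= mulrDr dotpBl dotpZl (dotpC (grad L _)).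
have := ler_wpM2l (ltW eta_gt0) (dotp_ws_grad_le (W t)); lra.
Qed.

(* The comparator [(c1 + c2) *: ws] splits in two: [c1 *: ws] has loss at most
   [expR (- (c1 * gamma))], while [c2 *: ws] absorbs the [eta ^+ 2] term of each step. *)
Lemma gd_dist_le c1 c2 t : 0 <= c1 -> 0 <= c2 -> 2 * c2 * gamma = eta ->
  dotp (W t - (c1 + c2) *: ws) (W t - (c1 + c2) *: ws) <=
    (c1 + c2) ^+ 2 + 2 * eta * t%:R * expR (- (c1 * gamma)).
Proof.
move=> c1_ge0 c2_ge0 c2E; set c := c1 + c2.
elim: t => [|t IH].
  rewrite /= dotpBZ_expand dotpC !dotp0r ws_unit; lra.
set v := grad L (W t).
have -> : W t.+1 - c *: ws = (W t - c *: ws) - eta *: v by rewrite /= addrAC.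
rewrite dotpBZ_expand [dotp (W t - _) v]dotpBl dotpZl -[t.+1]addn1 natrD.
have tangent : - dotp (W t) v + c1 * dotp ws v <= expR (- (c1 * gamma)).
  have := logistic_loss_tangent_le (c1 *: ws) (W t).
  have := logistic_loss_scale_le c1_ge0; have := logistic_loss_ge0 (W t).
  rewrite dotpBl dotpZl; lra.
have G0 := mean_sigm_ge0 (W t); have G1 := mean_sigm_le1 (W t).
have vv_le : dotp v v <= G (W t).
  by apply: le_trans (grad_sqr_le _) _; rewrite expr2 ler_piMl.
have h1 := ler_wpM2l (ltW eta_gt0) tangent.
have h2 := ler_wpM2l (mulr_ge0 (ltW eta_gt0) c2_ge0) (dotp_ws_grad_le (W t)).
rewrite -/v in h2.
have h3 := ler_wpM2l (sqr_ge0 eta) vv_le.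
have h4 : 2 * (eta * c2 * (gamma * G (W t))) = eta ^+ 2 * G (W t) by rewrite -c2E; ring.
move: IH; rewrite /c; lra.
Qed.

Lemma gd_mean_sigm_small t : 2 <= eta -> 60 * eta <= gamma ^+ 2 * t%:R ->
  exists2 k, (k < t)%N & G (W k) <= (5 * eta)^-1.
Proof.
move=> eta_ge2 t_large.
have [/existsP[k small_k]|no_small] := boolP [exists k : 'I_t, G (W k) <= (5 * eta)^-1].
  by exists k.
exfalso.
have sum_ge : t%:R * (5 * eta)^-1 <= \sum_(k < t) G (W k).
  rewrite mulr_natl -[t in _ *+ t]card_ord -sumr_const; apply: ler_sum => k _.
  by move/existsPn: no_small => /(_ k); rewrite -ltNge => /ltW.
have margin : gamma * t%:R / 5 <= dotp (W t) ws.
  have <- : eta * gamma * (t%:R * (5 * eta)^-1) = gamma * t%:R / 5 by field; lra.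
  apply: le_trans (gd_margin_ge t); apply: ler_wpM2l sum_ge.
  exact: mulr_ge0 (ltW eta_gt0) (ltW gamma_gt0).
pose c1 := 6 / gamma; pose c2 := eta / (2 * gamma).
have c1_ge0 : 0 <= c1 by rewrite divr_ge0 ?ltW.
have c2_ge0 : 0 <= c2 by rewrite divr_ge0 ?mulr_ge0 ?ltW //; lra.
have c1E : c1 * gamma = 6 by rewrite /c1; field; rewrite gt_eqF.
have c2E : 2 * c2 * gamma = eta by rewrite /c2; field; rewrite gt_eqF.
have cE : (c1 + c2) * gamma = 6 + eta / 2 by rewrite /c1 /c2; field; rewrite gt_eqF.
have := gd_dist_le t c1_ge0 c2_ge0 c2E; rewrite c1E.
have := dotp_sqr_le (W t - (c1 + c2) *: ws) ws.
rewrite ws_unit mulr1 dotpBl dotpZl ws_unit mulr1.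
have := margin_gap_gt gamma_gt0 eta_ge2 t_large cE margin; lra.
Qed.

Hypothesis n_le_eta : n%:R <= eta.

Lemma logistic_loss_step_sqr_le w : L w <= 2 / (5 * eta) ->
  L (w - eta *: grad L w) <= L w - eta * gamma ^+ 2 / 12 * L w ^+ 2.
Proof.
move=> L_small.
have G0 := mean_sigm_ge0 w; have GL := mean_sigm_le_loss w.
have etaG : eta * G w <= 2/5.
  have -> : 2/5 = eta * (2 / (5 * eta)) by field; rewrite gt_eqF.
  by rewrite ler_pM2l // (le_trans GL).
have L_le := logistic_loss_le_2mean_sigm (le_trans (ler_wpM2r G0 n_le_eta) etaG).
have step := logistic_loss_step_le eta_gt0 etaG.
have grad_ge := sqr_gamma_mean_sigm_le_grad w.
have sq : (gamma * L w) ^+ 2 <= 4 * (gamma * G w) ^+ 2.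
  have -> : 4 * (gamma * G w) ^+ 2 = (gamma * (2 * G w)) ^+ 2 by ring.
  rewrite ler_sqr ?nnegrE; first by apply: ler_wpM2l; [exact: ltW | exact: L_le].
    exact: mulr_ge0 (ltW gamma_gt0) (logistic_loss_ge0 w).
  exact: mulr_ge0 (ltW gamma_gt0) (mulr_ge0 (ler0n _ 2) G0).
have := ler_wpM2l (ltW eta_gt0) (le_trans sq (ler_wpM2l (ler0n _ 4) grad_ge)).
lra.
Qed.

Lemma gd_stable_phase k0 : (0 < n)%N -> L (W k0) <= 2 / (5 * eta) ->
  forall m, L (W (k0 + m)) <= 2 / (5 * eta) /\
    m%:R * (eta * gamma ^+ 2 / 12) <= (L (W (k0 + m)))^-1.
Proof.
move=> n_gt0 L_k0; elim=> [|m [L_small IH]].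
  by rewrite addn0 mul0r invr_ge0 logistic_loss_ge0.
rewrite addnS /=.
have step := logistic_loss_step_sqr_le L_small.
have a_ge0 : 0 <= eta * gamma ^+ 2 / 12 by rewrite !mulr_ge0 ?sqr_ge0 ?ltW.
split.
  apply: le_trans step _; apply: le_trans L_small.
  by rewrite lerBlDr lerDl mulr_ge0 ?sqr_ge0.
have := invr_le_step (logistic_loss_gt0 _ n_gt0) (logistic_loss_gt0 _ n_gt0) a_ge0 step.
by rewrite -[m.+1]addn1 natrD mulrDl mul1r; lra.
Qed.

Lemma gd_logistic_loss_le T : 2 <= eta -> 120 * eta <= gamma ^+ 2 * T%:R ->
  L (W T) <= 24 / (eta * gamma ^+ 2 * T%:R).
Proof.
move=> eta_ge2 T_large.
have T_gt0 : 0 < T%:R :> R by rewrite -(pmulr_rgt0 _ (exprn_gt0 2 gamma_gt0)); lra.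
have [n0|n_gt0] := posnP n.
  rewrite logistic_lossE (_ : n%:R^-1 = 0) ?mul0r; last by rewrite n0 invr0.
  by rewrite divr_ge0 // !mulr_ge0 ?sqr_ge0 ?ltW.
have [k k_lt small_k] : exists2 k, (k < uphalf T)%N & G (W k) <= (5 * eta)^-1.
  apply: gd_mean_sigm_small => //; apply: le_trans (_ : gamma ^+ 2 * T%:R / 2 <= _).
    lra.
  rewrite -mulrA ler_wpM2l ?sqr_ge0 // ler_pdivrMr // -natrM ler_nat.
  by rewrite uphalfE; have := odd_double_half T; rewrite -muln2; lia.
have L_k : L (W k) <= 2 / (5 * eta).
  have G0 := mean_sigm_ge0 (W k).
  have nG : n%:R * G (W k) <= 2/5.
    apply: le_trans (ler_pM (ler0n _ _) G0 n_le_eta small_k) _.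
    have -> : eta / (5 * eta) = 1/5 by field; rewrite gt_eqF.
    lra.
  apply: le_trans (logistic_loss_le_2mean_sigm nG) _.
  by apply: ler_wpM2l.
have [_] := gd_stable_phase n_gt0 L_k (T - k).
have k_le : (k <= T)%N by apply: leq_trans (ltnW k_lt) _; rewrite uphalfE; lia.
rewrite subnKC // => rate.
have T_le : T%:R <= 2 * (T - k)%:R :> R.
  rewrite -natrM ler_nat; move: k_lt; rewrite uphalfE.
  by have := odd_double_half T; rewrite -muln2; lia.
have L_gt0 := logistic_loss_gt0 (W T) n_gt0.
rewrite -(ler_pM2r L_gt0) mulVf ?gt_eqF // in rate.
rewrite ler_pdivlMr ?mulr_gt0 ?exprn_gt0 //.
have := mulr_ge0 (mulr_ge0 (ltW L_gt0) (ltW eta_gt0)) (sqr_ge0 gamma).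
move/ler_wpM2l/(_ _ _ T_le); lra.
Qed.

End LogisticRisk.

Theorem mainTheorem2 (R : realType) (d n : nat)
  (x : 'I_n -> 'rV[R]_d) (y : 'I_n -> R) (gamma : R) (wstar : 'rV[R]_d)
  (T : nat) :
  (forall i, enorm (x i) <= 1) ->
  (forall i, y i = 1 \/ y i = -1) ->
  0 < gamma ->
  enorm wstar = 1 ->
  (forall i, gamma <= y i * dotp (x i) wstar) ->
  120 * Num.max (expR 1) (n%:R) / gamma ^+ 2 <= T%:R ->
  let eta := gamma ^+ 2 * T%:R / 120 in
  let tau := 60 / gamma ^+ 2 *
    Num.max eta (Num.max (n%:R) (Num.max (expR 1)
      ((eta + n%:R) / eta * ln ((eta + n%:R) / eta)))) in
  tau <= T%:R / 2 /\
  logistic_loss x y (gd (logistic_loss x y) eta T) <=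
    480 * (ln (gamma ^+ 4 * T%:R ^+ 2) ^+ 2 / (gamma ^+ 4 * T%:R ^+ 2)).
Proof.
move=> x_le1 y_pm gamma_gt0 wstar_unit margin T_large eta tau.
have x_dotp i : dotp (x i) (x i) <= 1 by rewrite -enorm_sqr exprn_ile1 ?sqrtr_ge0.
have y_sqr i : y i ^+ 2 = 1 by case: (y_pm i) => ->; rewrite ?sqrrN expr1n.
have wstar_dotp : dotp wstar wstar = 1 by rewrite -enorm_sqr wstar_unit expr1n.
have gamma2_gt0 : 0 < gamma ^+ 2 := exprn_gt0 2 gamma_gt0.
have : Num.max (expR 1) n%:R <= eta.
  by move: T_large; rewrite /eta ler_pdivlMr // ler_pdivrMr //; lra.
rewrite ge_max => /andP[e_le n_le].
have eta_ge2 : 2 <= eta := le_trans (expR1_ge2 R) e_le.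
have T_eta : gamma ^+ 2 * T%:R = 120 * eta by rewrite /eta; field.
split; first exact: tau_le_half.
have eta_gt0 : 0 < eta by lra.
have T_ge : 120 * eta <= gamma ^+ 2 * T%:R by rewrite T_eta.
apply: le_trans (gd_logistic_loss_le x_dotp y_sqr margin wstar_dotp gamma_gt0 eta_gt0
  n_le eta_ge2 T_ge) _.
have -> : gamma ^+ 4 * T%:R ^+ 2 = (120 * eta) ^+ 2 by rewrite -T_eta; ring.
have -> : 24 / (eta * gamma ^+ 2 * T%:R) = 2880 / (120 * eta) ^+ 2.
  by rewrite -mulrA T_eta; field; lra.
by apply: ler_ln_sqr_div; rewrite expr2; nra.
Qed.
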